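(* Consider Dynamic A* (with \texttt{reeval} true or false) using a dyn-monotonic dynamic heuristic. Let $\langle s,\hat g,\hat h\rangle$ be an entry popped from Open at time $t_{\mathrm{pop}}$ (the start $\langle i,0\rangle$ of some iteration $i$). If $s\notin$ Closed at time $t_{\mathrm{pop}}$, then $\hat g+\hat h\le g^{t_{\mathrm{pop}}}(s)+h^{t_{\mathrm{pop}}}(s)$.
   Context: A transition system is $\mathcal T=\langle S,L,c,T,s_I,S_G\rangle$ with finite states $S$, finite labels $L$, cost function $c:L\to\mathbb R_{\ge0}$, transitions $T\subseteq S\times L\times S$, initial state $s_I$, goal states $S_G\subseteq S$. An information source $\sigma$ consists of a set $\mathcal I_\sigma$, $\iota_0^\sigma\in\mathcal I_\sigma$, $\mathrm{update}_\sigma:\mathcal I_\sigma\times T\to\mathcal I_\sigma$, $\mathrm{refine}_\sigma:\mathcal I_\sigma\times S\to\mathcal I_\sigma$. Reachable information: $\iota_n$ is reachable if obtained from $\iota_0^\sigma$ by a sequence of refine steps on states and update steps on transitions $e_1,\dots,e_n$, where each refined state and each origin of an updated transition is $s_I$ or the target of an earlier updated transition. A dynamic heuristic over $\sigma$ is $h:S\times\mathcal I_\sigma\to\mathbb R_{\ge0}\cup\{\infty\}$; it is dyn-monotonic if $h(s,\iota)\le h(s,\mathrm{update}_\sigma(\iota,t))$ and $h(s,\iota)\le h(s,\mathrm{refine}_\sigma(\iota,s'))$ for all reachable $\iota$, all $s,s'\in S$ and all $t\in T$. Parent source $\sigma_p$: $\mathcal I_{\sigma_p}$ = partial functions $S\rightharpoonup\mathbb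 R_{\ge0}\times(T\cup\{\bot\})$; $\iota_0=\{s_I\mapsto\langle0,\bot\rangle\}$; refine is the identity; $\mathrm{update}(\iota,\langle s,\ell,s'\rangle)$ with $\iota(s)=\langle g,\cdot\rangle$ changes only $s'$, setting it to $\langle g+c(\ell),\langle s,\ell,s'\rangle\rangle$ if $\iota(s')$ is undefined or has $g$-component $\ge g+c(\ell)$, otherwise unchanged. Dynamic A* takes $\mathcal T$, sources $\sigma_p,\sigma_h$, a dynamic heuristic $h$ over $\sigma_h$ and a Boolean flag \texttt{reeval}. Notation: at any moment $g(s)$ is the $g$-component of the current $\mathcal I(\sigma_p)(s)$ and $h(s)$ denotes $h(s,\mathcal I(\sigma_h))$ for the current $\mathcal I(\sigma_h)$. Open is a priority queue of entries $\langle s,g,h\rangle$ (duplicates allowed), popped by minimal stored value $g+h$ (ties arbitrary). Algorithm: 1. $\mathcal I(\sigma):=\iota_0^\sigma$ for both sources; $S_{\mathrm{known}}:=\{s_I\}$; Closed $:=\emptyset$; Open empty. If $h(s_I)<\infty$ insert $\langle s_I,g(s_I),h(s_I)\rangle$. 2. While Open is nonempty: pop an entry $\langle s,\hat g,\hat h\rangle$ of minimal $\hat g+\hat h$. If $s\in$ Closed, continue with the next iteration. Otherwise set $\mathcal I(\sigma):=\mathrm{refine}_\sigma(\mathcal I(\sigma),s)$ for both sources. If \texttt{reeval} is true and $\hat h<h(s)$: if $h(s)<\infty$ insert $\langle s,g(s),h(s)\rangle$; continue with the next iteration (this is a re-evaluation). Otherwise add $s$ to Closed ($s$ is expanded). If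 $s\in S_G$, return the path obtained by following the parent pointers of $\mathcal I(\sigma_p)$ from $s$ back to $s_I$. Otherwise, for each $t=\langle s,\ell,s'\rangle\in T$ in some order: let $old:=g(s')$ if $s'\in S_{\mathrm{known}}$ and undefined otherwise; set $\mathcal I(\sigma):=\mathrm{update}_\sigma(\mathcal I(\sigma),t)$ for both sources; add $s'$ to $S_{\mathrm{known}}$; if $h(s')=\infty$ skip $s'$; else if $old$ is undefined insert $\langle s',g(s'),h(s')\rangle$; else if $old>g(s')$, remove $s'$ from Closed if it is there (reopening) and insert $\langle s',g(s'),h(s')\rangle$. 3. Return ''unsolvable''. Times: the iterations of the while loop are numbered $i=1,2,\dots$ (iteration $i$ begins just before its pop); within iteration $i$ a step counter $j$ is $0$ at the start, becomes $1$ after the refine step, and increases by $1$ after each update step on a successor transition. Time $\langle i,j\rangle$ (time $\langle0,0\rangle$ is the initialization) is ordered lexicographically, and $g^{i,j}(s)$, $h^{i,j}(s)$ denote $g(s)$ and $h(s)$ with the information current at that time. *)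

From HB Require Import structures.
From mathcomp Require Import all_boot all_order all_algebra.
Set Implicit Arguments. Unset Strict Implicit. Unset Printing Implicit Defensive.
Import Order.TTheory GRing.Theory Num.Theory.
Local Open Scope ring_scope.

(* Extended nonnegative values R_{>=0} \cup {oo}: [None] encodes oo. *)
Definition ext_lt (R : realDomainType) (a b : option R) : bool :=
  match a, b with
  | Some x, Some y => x < y
  | Some _, None => true
  | None, _ => false
  end.

Definition ext_le (R : realDomainType) (a b : option R) : bool :=
  match a, b with
  | Some x, Some y => x <= y
  | _, None => true
  | None, Some _ => false
  end.

Record source (S L : finType) := Source {
  info : Type;
  info0 : info;
  upd : info -> (S * L * S) -> info;
  rfn : info -> S -> info
}.

Section DynAStar.
Variables (R : realDomainType) (S L : finType).
Variable c : L -> R.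
Variable T : {set (S * L * S)}.
Variable sI : S.
Variable SG : {set S}.

Definition trans := (S * L * S)%type.

(* Reachable information of a source: each refined state and each origin of
   an updated transition is sI or the target of an earlier updated transition
   (tracked in the list K). *)
Inductive reach_info (sig : source S L) : info sig -> seq S -> Prop :=
| RI0 : reach_info (info0 sig) [:: sI]
| RIref i K s : reach_info i K -> s \in K -> reach_info (rfn i s) K
| RIupd i K (t : trans) : reach_info i K -> t \in T -> t.1.1 \in K ->
    reach_info (upd i t) (t.2 :: K).

Definition dyn_monotonic (sig : source S L) (h : S -> info sig -> option R) :=
  forall i K, reach_info i K ->
    forall s : S,
      (forall t, t \in T -> ext_le (h s i) (h s (upd i t))) /\
      (forall s' : S, ext_le (h s i) (h s (rfn i s'))).

(* The parent source sigma_p: partial functions S -> R * (T + bot). *)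
Definition pinfo := S -> option (R * option trans).

Definition pinfo0 : pinfo := fun x => if x == sI then Some (0, None) else None.

Definition pref (i : pinfo) (s : S) : pinfo := i.

Definition pupd (i : pinfo) (t : trans) : pinfo :=
  let s := t.1.1 in let l := t.1.2 in let s' := t.2 in
  match i s with
  | None => i  (* never used by the algorithm: origins are always defined *)
  | Some (g, _) =>
      let ng := g + c l in
      if match i s' with None => true | Some (g', _) => ng <= g' end
      then fun x => if x == s' then Some (ng, Some t) else i x
      else i
  end.

Definition parent_source : source S L := Source pinfo0 pupd pref.

(* g-component (junk value 0 where undefined; never used there). *)
Definition gval (i : pinfo) (x : S) : R :=
  match i x with Some (g, _) => g | None => 0 end.

Variable sig : source S L.
Variable h : S -> info sig -> option R.
Variable reeval : bool.

Inductive phase :=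
| Loop                       (* at the start of a while-loop iteration *)
| Expand of seq trans        (* expanding; remaining successor transitions *)
| Done.

Record config := Config {
  cip : pinfo;
  cih : info sig;
  cknown : {set S};
  cclosed : {set S};
  copen : seq (S * R * R);   (* multiset of entries <s, g, h> *)
  cphase : phase
}.

Definition key (e : S * R * R) : R := e.1.2 + e.2.

Definition min_entry (op : seq (S * R * R)) (e : S * R * R) : bool :=
  (e \in op) && all (fun e' => key e <= key e') op.

Definition init_config : config :=
  Config pinfo0 (info0 sig) [set sI] set0
    (match h sI (info0 sig) with
     | Some v => [:: (sI, gval pinfo0 sI, v)]
     | None => [::] end)
    Loop.

Definition expand_one (cf : config) (t : trans) (ts : seq trans) : config :=
  let s' := t.2 in
  let old := if s' \in cknown cf then omap fst (cip cf s') else None in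
  let ip' := pupd (cip cf) t in
  let ih' := upd (cih cf) t in
  let kn' := s' |: cknown cf in
  match h s' ih' with
  | None => Config ip' ih' kn' (cclosed cf) (copen cf) (Expand ts)
  | Some v =>
      match old with
      | None => Config ip' ih' kn' (cclosed cf) ((s', gval ip' s', v) :: copen cf)
                       (Expand ts)
      | Some o =>
          if gval ip' s' < o then
            Config ip' ih' kn' (cclosed cf :\ s') ((s', gval ip' s', v) :: copen cf)
                   (Expand ts)
          else Config ip' ih' kn' (cclosed cf) (copen cf) (Expand ts)
      end
  end.

Inductive step : config -> config -> Prop :=
| StPopClosed cf e :
    cphase cf = Loop -> min_entry (copen cf) e -> e.1.1 \in cclosed cf ->
    step cf (Config (cip cf) (cih cf) (cknown cf) (cclosed cf)
                    (rem e (copen cf)) Loop)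
| StReeval cf e :
    cphase cf = Loop -> min_entry (copen cf) e -> e.1.1 \notin cclosed cf ->
    let ip1 := pref (cip cf) e.1.1 in
    let ih1 := rfn (cih cf) e.1.1 in
    reeval -> ext_lt (Some e.2) (h e.1.1 ih1) ->
    step cf (Config ip1 ih1 (cknown cf) (cclosed cf)
                    (match h e.1.1 ih1 with
                     | Some v => (e.1.1, gval ip1 e.1.1, v) :: rem e (copen cf)
                     | None => rem e (copen cf) end) Loop)
| StGoal cf e :
    cphase cf = Loop -> min_entry (copen cf) e -> e.1.1 \notin cclosed cf ->
    let ip1 := pref (cip cf) e.1.1 in
    let ih1 := rfn (cih cf) e.1.1 in
    ~~ (reeval && ext_lt (Some e.2) (h e.1.1 ih1)) ->
    e.1.1 \in SG ->
    step cf (Config ip1 ih1 (cknown cf) (e.1.1 |: cclosed cf)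
                    (rem e (copen cf)) Done)
| StExpand cf e ts :
    cphase cf = Loop -> min_entry (copen cf) e -> e.1.1 \notin cclosed cf ->
    let ip1 := pref (cip cf) e.1.1 in
    let ih1 := rfn (cih cf) e.1.1 in
    ~~ (reeval && ext_lt (Some e.2) (h e.1.1 ih1)) ->
    e.1.1 \notin SG ->
    perm_eq ts [seq t <- enum T | t.1.1 == e.1.1] ->
    step cf (Config ip1 ih1 (cknown cf) (e.1.1 |: cclosed cf)
                    (rem e (copen cf)) (Expand ts))
| StSucc cf t ts :
    cphase cf = Expand (t :: ts) ->
    step cf (expand_one cf t ts)
| StEndExpand cf :
    cphase cf = Expand [::] ->
    step cf (Config (cip cf) (cih cf) (cknown cf) (cclosed cf) (copen cf) Loop).

Inductive reachable : config -> Prop :=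
| Reach0 : reachable init_config
| ReachS cf cf' : reachable cf -> step cf cf' -> reachable cf'.

End DynAStar.

Arguments Loop {S L}.
Arguments Done {S L}.
Arguments Expand {S L} _.

(* The invariant behind the lemma: every known state [x] that is not closed and
   has a finite current heuristic value [v] is represented in Open by an entry
   [<x, g(x), hh>] with [hh <= v].  Dyn-monotonicity makes heuristic values only
   grow, so stale entries stay below the current value; whenever [g(x)] changes
   or [x] is reopened, the algorithm pushes a fresh entry.  The popped entry is
   minimal, so its key is at most [g(x) + hh <= g(x) + h(x)]. *)

From HB Require Import structures.
From mathcomp Require Import all_boot all_order all_algebra.
Set Implicit Arguments. Unset Strict Implicit. Unset Printing Implicit Defensive.
Import Order.TTheory GRing.Theory Num.Theory.
Local Open Scope ring_scope.

Lemma ext_le_Some (R : realDomainType) (a : option R) (v : R) :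
  ext_le a (Some v) -> exists2 u, a = Some u & u <= v.
Proof. by case: a => [u|] //= uv; exists u. Qed.

Section Invariant.
Variables (R : realDomainType) (S L : finType) (c : L -> R)
  (T : {set (S * L * S)}) (sI : S) (SG : {set S})
  (sig : source S L) (h : S -> info sig -> option R) (reeval : bool).
Hypothesis hmono : dyn_monotonic T sI h.

Lemma pupd_other (ip : pinfo R S L) (t : trans S L) x :
  x != t.2 -> pupd c ip t x = ip x.
Proof.
move=> xt; rewrite /pupd; case: (ip t.1.1) => [[g p]|] //.
by case: ifP => // _; rewrite (negbTE xt).
Qed.

Lemma pupd_target (ip : pinfo R S L) (t : trans S L) :
  ip t.1.1 <> None ->
  exists2 gp, pupd c ip t t.2 = Some gp &
    forall g p, ip t.2 = Some (g, p) -> gp.1 <= g.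
Proof.
rewrite /pupd; case: (ip t.1.1) => [[g p] _|//].
case: ifP => [le_g|].
  by rewrite eqxx; eexists => // ? ? E; rewrite E in le_g.
case E: (ip t.2) => [[g' p']|] // _.
by exists (g', p') => // ? ? [<-].
Qed.

Definition covered (ip : pinfo R S L) (op : seq (S * R * R)) x (v : R) :=
  exists2 hh, (x, gval ip x, hh) \in op & hh <= v.

Definition open_covers ip ih (kn cl : {set S}) op :=
  forall x v, x \in kn -> x \notin cl -> h x ih = Some v -> covered ip op x v.

Lemma covered_le ip op x u v : covered ip op x u -> u <= v -> covered ip op x v.
Proof. by case=> hh hin hu uv; exists hh => //; apply: le_trans uv. Qed.

Lemma covered_sub ip op op' x v :
  {subset op <= op'} -> covered ip op x v -> covered ip op' x v.
Proof. by move=> sub [hh /sub hin hv]; exists hh. Qed.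

Lemma covered_rem ip op e x v :
  x != e.1.1 -> covered ip op x v -> covered ip (rem e op) x v.
Proof.
move=> xe [hh hin hv]; exists hh => //; apply: rem_mem hin.
by apply: contraNneq xe => <-.
Qed.

Lemma covered_head ip op x v : covered ip ((x, gval ip x, v) :: op) x v.
Proof. by exists v; rewrite ?mem_head. Qed.

Lemma open_covers_grow ip ih ih' kn cl op :
  (forall x, ext_le (h x ih) (h x ih')) ->
  open_covers ip ih kn cl op -> open_covers ip ih' kn cl op.
Proof.
move=> grow cov x v xk xcl hv; have := grow x; rewrite hv.
by case/ext_le_Some=> u hu uv; apply: covered_le (cov x u xk xcl hu) uv.
Qed.

Definition pending_ok (kn : {set S}) (ph : phase S L) :=
  if ph is Expand ts then forall t, t \in ts -> t \in T /\ t.1.1 \in kn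
  else True.

Record inv (cf : config R sig) : Prop := Inv {
  inv_reach : exists2 K, reach_info T sI (cih cf) K & {subset cknown cf <= K};
  inv_parent : forall x, x \in cknown cf -> cip cf x <> None;
  inv_open_known : forall e, e \in copen cf -> e.1.1 \in cknown cf;
  inv_covers : open_covers (cip cf) (cih cf) (cknown cf) (cclosed cf) (copen cf);
  inv_pending : pending_ok (cknown cf) (cphase cf) }.

Lemma inv_init : inv (init_config sI h).
Proof.
split=> //=.
- by exists [:: sI] => [|x]; [exact: RI0 | rewrite !inE].
- by move=> x; rewrite inE /pinfo0 => ->.
- by case: (h sI _) => [v|] // e; rewrite mem_seq1 => /eqP ->; rewrite inE.
- by move=> x v; rewrite inE => /eqP -> _ ->; apply: covered_head.
Qed.

Lemma inv_refine cf x : inv cf -> x \in cknown cf ->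
  inv (Config (cip cf) (rfn (cih cf) x) (cknown cf) (cclosed cf) (copen cf)
         (cphase cf)).
Proof.
case=> [[K RK kK] par opk cov pend] xk; split=> //=.
- by exists K => //; apply: RIref RK (kK x xk).
- by apply: open_covers_grow cov => y; apply: (proj2 (hmono RK y)).
Qed.

Lemma inv_close cf e (cl : {set S}) ph :
  inv cf -> e \in copen cf -> e.1.1 \in cl -> cclosed cf \subset cl ->
  pending_ok (cknown cf) ph ->
  inv (Config (cip cf) (cih cf) (cknown cf) cl (rem e (copen cf)) ph).
Proof.
case=> reach par opk cov _ ein ecl /subsetP sub pend; split=> //=.
- by move=> e' /mem_rem /opk.
- move=> x v xk xcl hx; apply: covered_rem.
    by apply: contraNneq xcl => ->.
  by apply: cov hx => //; apply: contra xcl; apply: sub.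
Qed.

Lemma inv_reinsert cf e : inv cf -> e \in copen cf ->
  inv (Config (cip cf) (cih cf) (cknown cf) (cclosed cf)
         (if h e.1.1 (cih cf) is Some v
          then (e.1.1, gval (cip cf) e.1.1, v) :: rem e (copen cf)
          else rem e (copen cf)) Loop).
Proof.
case=> reach par opk cov _ ein; split=> //=.
- case: (h _ _) => [v|] e'; last by move/mem_rem/opk.
  by rewrite inE => /orP[/eqP-> | /mem_rem/opk //]; apply: opk ein.
- move=> x v xk xcl hx; case: (eqVneq x e.1.1) => [xe|xe].
    by rewrite -xe hx; apply: covered_head.
  apply: covered_sub (covered_rem xe (cov x v xk xcl hx)).
  by case: (h _ _) => [w|] // y yin; rewrite inE yin orbT.
Qed.

Lemma inv_pop cf e ph : inv cf -> e \in copen cf -> pending_ok (cknown cf) ph ->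
  inv (Config (cip cf) (rfn (cih cf) e.1.1) (cknown cf) (e.1.1 |: cclosed cf)
         (rem e (copen cf)) ph).
Proof.
move=> Icf ein pend; have Iref := inv_refine Icf (inv_open_known Icf ein).
by apply: (inv_close Iref ein); [exact: setU11 | exact: subsetU1 |].
Qed.

Lemma inv_succ cf t ts (cl : {set S}) op :
  inv cf -> cphase cf = Expand (t :: ts) ->
  (forall e, e \in op -> e \in copen cf \/ e.1.1 = t.2) ->
  {subset copen cf <= op} -> cclosed cf :\ t.2 \subset cl ->
  (forall v, t.2 \notin cl -> h t.2 (upd (cih cf) t) = Some v ->
     covered (pupd c (cip cf) t) op t.2 v) ->
  inv (Config (pupd c (cip cf) t) (upd (cih cf) t) (t.2 |: cknown cf) cl op
         (Expand ts)).
Proof.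
case=> [[K RK kK] par opk cov pend] ph opE sub /subsetP clD cov_t.
move: pend; rewrite /pending_ok ph => pend.
have [tT tk] := pend t (mem_head _ _).
split=> /=.
- exists (t.2 :: K); first exact: RIupd RK tT (kK _ tk).
  by move=> x /setU1P[->|/kK xK]; rewrite inE ?eqxx ?xK ?orbT.
- move=> x xk; case: (eqVneq x t.2) => [-> | xt].
    by have [gp -> _] := pupd_target (par _ tk).
  by rewrite pupd_other //; apply: par; move: xk; rewrite in_setU1 (negbTE xt).
- move=> e /opE[/opk ek|->]; [exact: setU1r | exact: setU11].
- move=> x v xk xcl hx; case: (eqVneq x t.2) => [xt | xt].
    by rewrite xt in xcl hx *; apply: cov_t.
  have /ext_le_Some[u hu uv] : ext_le (h x (cih cf)) (Some v).
    by rewrite -hx; apply: (proj1 (hmono RK x)).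
  have xk' : x \in cknown cf by move: xk; rewrite in_setU1 (negbTE xt).
  have xcl' : x \notin cclosed cf.
    by apply: contra xcl => xcl; apply: clD; rewrite in_setD1 xt.
  apply: covered_sub sub _; apply: covered_le uv.
  by rewrite /covered /gval pupd_other //; apply: cov hu.
- move=> t' t'ts; have [t'T t'k] := pend t' (mem_behead (s := t :: ts) t'ts).
  by split=> //; apply: setU1r.
Qed.

Lemma inv_expand_one cf t ts : inv cf -> cphase cf = Expand (t :: ts) ->
  inv (expand_one c h cf t ts).
Proof.
move=> Icf ph; have [[K RK _] par _ cov pend] := Icf.
have [tT tk] : t \in T /\ t.1.1 \in cknown cf.
  by move: pend; rewrite /pending_ok ph; apply; apply: mem_head.
set ip' := pupd c (cip cf) t.
have push_src v e : e \in (t.2, gval ip' t.2, v) :: copen cf ->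
    e \in copen cf \/ e.1.1 = t.2.
  by rewrite inE => /orP[/eqP->|]; [right | left].
have push_sub v : {subset copen cf <= (t.2, gval ip' t.2, v) :: copen cf}.
  by move=> e ein; rewrite inE ein orbT.
rewrite /expand_one; case hE: (h t.2 (upd (cih cf) t)) => [v|]; last first.
  apply: (inv_succ Icf ph); [by move=> e; left | by [] | exact: subD1set |].
  by move=> w _; rewrite hE.
case: ifP => t2k; last first.
  apply: (inv_succ Icf ph);
    [exact: push_src | exact: push_sub | exact: subD1set |].
  by move=> w _; rewrite hE => -[<-]; apply: covered_head.
case E0: (cip cf t.2) => [[g0 p0]|]; last by have := par _ t2k; rewrite E0.
case: ifP => lt_g0.
  apply: (inv_succ Icf ph);
    [exact: push_src | exact: push_sub | exact: subxx |].
  by move=> w _; rewrite hE => -[<-]; apply: covered_head.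
apply: (inv_succ Icf ph); [by move=> e; left | by [] | exact: subD1set |].
move=> w t2cl; rewrite hE => -[<-].
have g_eq : gval ip' t.2 = g0.
  have [[g' p'] E' /(_ _ _ E0) le_g0] := pupd_target (par _ tk).
  move: lt_g0; rewrite /gval /ip' E' /= => /negbT; rewrite -leNgt => ge_g0.
  by apply/eqP; rewrite eq_le le_g0.
have /ext_le_Some[u hu uv] : ext_le (h t.2 (cih cf)) (Some v).
  by rewrite -hE; apply: (proj1 (hmono RK t.2)).
apply: covered_le uv; have [hh] := cov _ _ t2k t2cl hu.
by rewrite /gval E0 -g_eq; exists hh.
Qed.

Lemma inv_step cf cf' : inv cf -> step c T SG h reeval cf cf' -> inv cf'.
Proof.
move=> Icf st; case: st Icf.
- move=> {}cf e _ /andP[ein _] ecl Icf.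
  by apply: (inv_close Icf ein ecl (subxx _)).
- move=> {}cf e _ /andP[ein _] _ ip1 ih1 _ _ Icf.
  exact: inv_reinsert (inv_refine Icf (inv_open_known Icf ein)) ein.
- by move=> {}cf e _ /andP[ein _] _ ip1 ih1 _ _ Icf; apply: inv_pop Icf ein _.
- move=> {}cf e ts _ /andP[ein _] _ ip1 ih1 _ _ pts Icf.
  apply: (inv_pop Icf ein) => t.
  rewrite (perm_mem pts) mem_filter mem_enum => /andP[/eqP -> tT].
  by split=> //; exact: (inv_open_known Icf ein).
- by move=> {}cf t ts ph Icf; apply: inv_expand_one Icf ph.
- by move=> {}cf _ []; split.
Qed.

Lemma inv_reachable cf : reachable c T sI SG h reeval cf -> inv cf.
Proof.
elim=> [|cf1 cf2 _ Icf1 st]; first exact: inv_init.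
exact: inv_step Icf1 st.
Qed.

End Invariant.

Theorem lemma4 (R : realDomainType) (S L : finType) (c : L -> R)
    (T : {set (S * L * S)}) (sI : S) (SG : {set S})
    (sig : source S L) (h : S -> info sig -> option R) (reeval : bool)
    (c_ge0 : forall l, 0 <= c l)
    (h_ge0 : forall s i v, h s i = Some v -> 0 <= v)
    (hmono : dyn_monotonic T sI h)
    (cf : config R sig)
    (hreach : reachable c T sI SG h reeval cf)
    (s : S) (ghat hhat : R) :
  cphase cf = Loop ->
  min_entry (copen cf) (s, ghat, hhat) ->
  s \notin cclosed cf ->
  exists (g : R) (p : option (S * L * S)),
    cip cf s = Some (g, p) /\
    ext_le (Some (ghat + hhat))
      (match h s (cih cf) with Some v => Some (g + v) | None => None end).
Proof.
move=> _ /andP[sin /allP smin] scl.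
have [_ par opk cov _] := inv_reachable hmono hreach.
have sk : s \in cknown cf := opk _ sin.
case E: (cip cf s) => [[g p]|]; last by have := par s sk; rewrite E.
exists g, p; split=> //.
case hE: (h s (cih cf)) => [v|] //=.
have [hh hin hv] := cov s v sk scl hE.
by apply: le_trans (smin _ hin) _; rewrite /key /= /gval E lerD2l.
Qed.
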